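(* For every $U\in\mathcal U_n$ there is exactly one sequence $w$ which is the area sequence of a Dyck path of length $n$ and such that $P(w)$ is isomorphic to $U$ as a poset; moreover this sequence equals $q(U)$.
   Context: A unit interval order on $\{1,\dots,n\}$ is a relation $\prec$ such that there are closed intervals $I_1,\dots,I_n$ of length $1$ in $\mathbb R$, numbered from left to right, with $i\prec j$ iff $I_i$ lies strictly to the left of $I_j$; $\mathcal U_n$ is the set of these. Area sequences of Dyck paths of length $n$ are the sequences $(a_1,\dots,a_n)$ of nonnegative integers with $a_1=0$ and $a_i\le a_{i-1}+1$. For a sequence $w=(w_1,\dots,w_n)$ of nonnegative integers, $P(w)$ is the poset on $\{1,\dots,n\}$ with $i\prec j$ iff $w_j-w_i\ge2$, or $w_j-w_i=1$ and $i<j$. Levels: $\ell(1)=0$ and $\ell(j)=\max_{i\prec j}\ell(i)+1$ for $j\ge2$, with $\ell(j)=0$ if no $i\prec j$. Algorithm: $q_1=(0)$; given $q_{i-1}$, let $C_i$ be the number of $k\prec i$ with $\ell(k)=\ell(i)-1$, and obtain $q_i$ by inserting a letter $\ell(i)$ into $q_{i-1}$ directly after the (possibly empty) run of letters $\ell(i)$ immediately following the $C_i$-th occurrence of the letter $\ell(i)-1$ (the 0-th occurrence meaning the start of the word); $q(U)=q_n$. *)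

From Stdlib Require Import Reals.
From mathcomp Require Import all_boot.

Set Implicit Arguments.
Unset Strict Implicit.
Unset Printing Implicit Defensive.

(* Elements 1..n of the paper are the ordinals 0..n-1 of 'I_n (shift by one). *)

(* A unit interval order on {1..n}: there are reals x_1 <= ... <= x_n
   (left endpoints of the unit intervals I_i = [x_i, x_i + 1], numbered from
   left to right) such that i < j in the order iff I_i lies strictly to the
   left of I_j, i.e. x_i + 1 < x_j. *)
Definition unit_interval_order (n : nat) (U : rel 'I_n) : Prop :=
  exists x : 'I_n -> R,
    (forall i j : 'I_n, i <= j -> Rle (x i) (x j)) /\
    (forall i j : 'I_n, U i j <-> Rlt (Rplus (x i) 1) (x j)).

Definition area_seq (n : nat) (w : seq nat) : Prop :=
  size w = n /\ (0 < n -> nth 0 w 0 = 0) /\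
  (forall i, 0 < i -> i < n -> nth 0 w i <= (nth 0 w i.-1).+1).

Definition Prel (w : seq nat) : rel nat := fun i j =>
  (nth 0 w i + 2 <= nth 0 w j) || ((nth 0 w j == (nth 0 w i).+1) && (i < j)).

Definition poset_iso (n : nat) (U : rel 'I_n) (P : rel nat) : Prop :=
  exists f : 'I_n -> 'I_n, bijective f /\
    forall i j : 'I_n, U i j = P (f i) (f j).

Definition Unat (n : nat) (U : rel 'I_n) : rel nat := fun i j =>
  match insub i, insub j with
  | Some i', Some j' => U i' j'
  | _, _ => false
  end.

(* Levels: l(j) = max_{i < j, i prec j} (l(i) + 1), or 0 if no such i.
   (For unit interval orders, i prec j forces i < j.) *)
Definition lev_next (R : rel nat) (s : seq nat) (j : nat) : nat :=
  \max_(i < j | R i j) (nth 0 s i).+1.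

Fixpoint levs (R : rel nat) (m : nat) : seq nat :=
  match m with
  | 0 => [::]
  | m'.+1 => let s := levs R m' in rcons s (lev_next R s m')
  end.

(* Position right after the c-th occurrence of letter b in q (0 if c = 0). *)
Fixpoint after_occ (b c : nat) (q : seq nat) : nat :=
  if c is 0 then 0 else
  match q with
  | [::] => 0
  | x :: q' => (after_occ b (if x == b then c.-1 else c) q').+1
  end.

(* Insert letter a directly after the run of a's immediately following the
   c-th occurrence of a - 1 (the 0-th occurrence being the start of q). *)
Definition insert_step (a c : nat) (q : seq nat) : seq nat :=
  let p0 := after_occ a.-1 c q in
  let p := p0 + find (fun x => x != a) (drop p0 q) in
  take p q ++ a :: drop p q.

Definition Ccount (R : rel nat) (L : seq nat) (i : nat) : nat :=
  count (fun k => R k i && (nth 0 L k == (nth 0 L i).-1)) (iota 0 i).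

(* qrec R L m = q_{m+1} (0-based element m). *)
Fixpoint qrec (R : rel nat) (L : seq nat) (m : nat) : seq nat :=
  match m with
  | 0 => [:: 0]
  | m'.+1 => insert_step (nth 0 L m'.+1) (Ccount R L m'.+1) (qrec R L m')
  end.

Definition qU (n : nat) (U : rel 'I_n) : seq nat :=
  qrec (Unat U) (levs (Unat U) n) n.-1.

From Stdlib Require Import Reals Lra FunctionalExtensionality.
From mathcomp Require Import all_boot zify.

Set Implicit Arguments.
Unset Strict Implicit.
Unset Printing Implicit Defensive.

(** Order the positions of an area sequence w by the key (w_k, k) and relabel
  P(w) along this order; the result [Prel_ranked w] is "monotone": the
  predecessors of j form an initial segment [0, d(j)), with d nondecreasing
  and d(j) <= j. The left-to-right labelling of a unit interval order has the
  same shape. A monotone relation is determined by d, and the sorted sequence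
  of the d(j) is an isomorphism invariant, so two isomorphic monotone
  relations are equal.

  Running the algorithm on [Prel_ranked w] returns w: the element of rank r
  has level w_p, where p is its position, C counts the positions to the left
  of p carrying the value w_p - 1, and the insertion puts w_p exactly where
  it sits in the subword of w read at the r + 1 smallest positions. Hence
  w |-> d is injective on area sequences. As d |-> (j - d(j))_j maps the
  admissible d injectively to area sequences, counting shows that every
  admissible d, hence every unit interval order, comes from an area sequence. *)

Lemma after_occ0 b q : after_occ b 0 q = 0.
Proof. by case: q. Qed.

Lemma after_occ_cat b s t :
  after_occ b (count_mem b s).+1 (s ++ b :: t) = (size s).+1.
Proof.
elim: s => [|x s IHs] /=; first by rewrite eqxx after_occ0.
by case: eqVneq => _ /=; rewrite IHs.
Qed.

Lemma find_neq_cat (a : nat) (s t : seq nat) : all (pred1 a) s ->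
  find (fun x => x != a) (s ++ t) = size s + find (fun x => x != a) t.
Proof.
move=> /allP s_a; rewrite find_cat ifF //.
by apply/negbTE/hasPn => x /s_a /eqP ->; rewrite eqxx.
Qed.

Lemma find_neq_lt (a : nat) (t : seq nat) :
  all (fun x => x < a) t -> find (fun x => x != a) t = 0.
Proof. by case: t => //= x t /andP[x_lt _]; rewrite neq_ltn x_lt. Qed.

Lemma insert_step0 a (s t : seq nat) : all (pred1 a) s -> all (fun x => x < a) t ->
  insert_step a 0 (s ++ t) = s ++ a :: t.
Proof.
move=> s_a t_a; rewrite /insert_step after_occ0 drop0 find_neq_cat // find_neq_lt //.
by rewrite addn0 take_size_cat // drop_size_cat.
Qed.

Lemma insert_step_cat a (s1 s2 t : seq nat) : all (pred1 a) s2 -> all (fun x => x < a) t ->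
  insert_step a (count_mem a.-1 s1).+1 (s1 ++ a.-1 :: s2 ++ t) =
  s1 ++ a.-1 :: s2 ++ a :: t.
Proof.
move=> s2_a t_a; rewrite /insert_step after_occ_cat -(size_rcons s1 a.-1).
rewrite -[s1 ++ _ :: s2 ++ t]cat_rcons.
rewrite drop_size_cat // find_neq_cat // find_neq_lt // addn0 -size_cat catA.
by rewrite take_size_cat // drop_size_cat // -catA cat_rcons.
Qed.

Lemma size_levs R m : size (levs R m) = m.
Proof. by elim: m => //= m IHm; rewrite size_rcons IHm. Qed.

Lemma nth_levs R m i : i < m -> nth 0 (levs R m) i = lev_next R (levs R i) i.
Proof.
elim: m => // m IHm; rewrite ltnS leq_eqVlt => /orP[/eqP->|i_lt_m] /=.
  by rewrite nth_rcons size_levs ltnn eqxx.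
by rewrite nth_rcons size_levs i_lt_m IHm.
Qed.

Lemma nth_levs_prefix R m m' i : i < m -> m <= m' ->
  nth 0 (levs R m) i = nth 0 (levs R m') i.
Proof. by move=> i_lt_m m_le_m'; rewrite !nth_levs // (leq_trans i_lt_m). Qed.

Lemma Unat_ord n (U : rel 'I_n) (i j : 'I_n) : Unat U i j = U i j.
Proof. by rewrite /Unat !valK. Qed.

Lemma count_iota_down_closed (P : pred nat) m :
  (forall k k', k' <= k < m -> P k -> P k') ->
  forall k, k < m -> P k = (k < count P (iota 0 m)).
Proof.
elim: m => // m IHm P_down k; rewrite ltnS -[m.+1]addn1 iotaD count_cat /= addn0 add0n.
case Pm: (P m) => k_le_m.
  have -> : count P (iota 0 m) = m.
    rewrite -[RHS](size_iota 0 m) -count_predT; apply: eq_in_count => k'.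
    by rewrite mem_iota => /andP[_ k'_lt_m]; apply: P_down Pm; lia.
  by rewrite addn1 ltnS k_le_m; apply: P_down Pm; lia.
rewrite addn0; case: (ltngtP k m) k_le_m => // [k_lt_m _|-> _].
  by apply: IHm k_lt_m => k1 k2 k21; apply: P_down; lia.
by rewrite Pm; apply/esym/negbTE; rewrite -leqNgt -[leqRHS](size_iota 0 m) count_size.
Qed.

Lemma count_iota_ltn (P : pred nat) p m : p <= m ->
  count (fun k => P k && (k < p)) (iota 0 m) = count P (iota 0 p).
Proof.
move=> p_le_m; rewrite -(subnKC p_le_m) iotaD count_cat add0n -[RHS]addn0.
congr (_ + _); last rewrite -(count_pred0 (iota p (m - p)));
  apply: eq_in_count => k; rewrite mem_iota.
  by case/andP=> _ ->; rewrite andbT.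
by case/andP=> p_le_k _; rewrite ltnNge p_le_k andbF.
Qed.

Lemma count_lt_sub (T : eqType) (P Q : pred T) s x :
  subpred P Q -> x \in s -> Q x -> ~~ P x -> count P s < count Q s.
Proof.
move=> PQ; elim: s => //= y s IHs; rewrite inE => /orP[/eqP<-|x_s] Qx Px.
  by rewrite Qx (negbTE Px) add0n add1n ltnS sub_count.
have := IHs x_s Qx Px; case Py: (P y); first by rewrite (PQ _ Py); lia.
by case: (Q y); lia.
Qed.

Lemma iota_split p n : p < n -> iota 0 n = iota 0 p ++ p :: iota p.+1 (n - p.+1).
Proof. by move=> p_lt_n; rewrite -{1}(subnKC p_lt_n) addSnnS iotaD add0n. Qed.

Section MonotoneRelations.
Variable n : nat.
Implicit Types (U V : rel 'I_n) (i j k : 'I_n).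

Definition monotone_rel U :=
  (forall k' k j, k' <= k -> U k j -> U k' j) /\
  (forall k j j', j <= j' -> U k j -> U k j').

Definition npred U j := count (U^~ j) (enum 'I_n).

Lemma npred_iota U j : npred U j = count (fun x => Unat U x j) (iota 0 n).
Proof. by rewrite /npred -val_enum_ord count_map; apply: eq_count => k /=; rewrite Unat_ord. Qed.

Lemma monotone_relE U : monotone_rel U -> forall i j, U i j = (i < npred U j).
Proof.
case=> U_down _ i j; rewrite npred_iota -Unat_ord.
apply: count_iota_down_closed (ltn_ord i) => x y /andP[y_le_x x_lt_n].
have y_lt_n := leq_ltn_trans y_le_x x_lt_n.
rewrite -[x]/(val (Ordinal x_lt_n)) -[y]/(val (Ordinal y_lt_n)) !Unat_ord.
exact: U_down.
Qed.

Lemma npred_mono U : monotone_rel U -> {homo npred U : i j / i <= j}.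
Proof. by case=> _ U_up i j i_le_j; apply: sub_count => k /=; apply: U_up. Qed.

Lemma npred_le U : monotone_rel U -> (forall i j, U i j -> i < j) -> forall j, npred U j <= j.
Proof.
move=> monoU U_lt j; rewrite leqNgt; apply/negP => j_lt.
by have := U_lt j j; rewrite (monotone_relE monoU) j_lt ltnn => /(_ isT).
Qed.

Lemma npred_le_n U j : npred U j <= n.
Proof. by rewrite -[leqRHS](size_enum_ord n) count_size. Qed.

Lemma monotone_rel_eq U V : monotone_rel U -> monotone_rel V -> npred U =1 npred V -> U = V.
Proof.
move=> monoU monoV npredUV; apply: functional_extensionality => i.
apply: functional_extensionality => j.
by rewrite (monotone_relE monoU) (monotone_relE monoV) npredUV.
Qed.

Lemma perm_map_enum_bij (f : 'I_n -> 'I_n) :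
  bijective f -> perm_eq (map f (enum 'I_n)) (enum 'I_n).
Proof.
move=> bij_f; apply: uniq_perm; first by rewrite map_inj_uniq ?enum_uniq //; apply: bij_inj.
  exact: enum_uniq.
case: bij_f => g _ gK x; rewrite mem_enum; apply/mapP; exists (g x); by rewrite ?mem_enum ?gK.
Qed.

Lemma sorted_homo (d : 'I_n -> nat) :
  {homo d : i j / i <= j} -> sorted leq (map d (enum 'I_n)).
Proof.
move=> d_mono; rewrite sorted_map.
have : sorted (relpre val ltn) (enum 'I_n) by rewrite -sorted_map val_enum_ord iota_ltn_sorted.
by apply: sub_sorted => i j /ltnW /d_mono.
Qed.

Lemma homo_bij_eq (d e : 'I_n -> nat) (f : 'I_n -> 'I_n) : bijective f -> d =1 e \o f ->
  {homo d : i j / i <= j} -> {homo e : i j / i <= j} -> d =1 e.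
Proof.
move=> bij_f def_d d_mono e_mono j.
have perm_de : perm_eq (map d (enum 'I_n)) (map e (enum 'I_n)).
  by rewrite (eq_map def_d) map_comp perm_map // perm_map_enum_bij.
have := sorted_eq leq_trans anti_leq (sorted_homo d_mono) (sorted_homo e_mono) perm_de.
move/(congr1 (nth 0 ^~ j)).
by rewrite !(nth_map j, size_enum_ord) // -enumT ?nth_ord_enum ?size_enum_ord.
Qed.

Lemma npred_iso U V f : bijective f -> (forall i j, U i j = V (f i) (f j)) ->
  npred U =1 npred V \o f.
Proof.
move=> bij_f UV j; rewrite /npred /= (eq_count (a2 := fun i => V (f i) (f j))) //.
by rewrite -(count_map f (V^~ (f j))) (permP (perm_map_enum_bij bij_f)).
Qed.

Lemma iso_monotone_rel_eq U V f : monotone_rel U -> monotone_rel V -> bijective f ->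
  (forall i j, U i j = V (f i) (f j)) -> U = V.
Proof.
move=> monoU monoV bij_f UV; apply: monotone_rel_eq => //.
by apply: (homo_bij_eq bij_f (npred_iso bij_f UV)); apply: npred_mono.
Qed.

End MonotoneRelations.

Lemma unit_interval_order_monotone n (U : rel 'I_n) : unit_interval_order U -> monotone_rel U.
Proof.
case=> x [x_mono Ux]; split=> [k' k j k'_le_k|k j j' j_le_j'] /Ux Ukj; apply/Ux.
  by have := x_mono _ _ k'_le_k; lra.
by have := x_mono _ _ j_le_j'; lra.
Qed.

Lemma unit_interval_order_lt n (U : rel 'I_n) : unit_interval_order U ->
  forall i j, U i j -> i < j.
Proof.
case=> x [x_mono Ux] i j /Ux Uij; rewrite ltnNge; apply/negP => /x_mono; lra.
Qed.

Section AreaOrder.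
Variables (n : nat) (w : seq nat).
Local Notation W k := (nth 0 w k).

Definition wlt a b := (W a < W b) || ((W a == W b) && (a < b)).

Lemma wlt_trans : transitive wlt.
Proof. by move=> b a c; rewrite /wlt => /orP[?|/andP[/eqP ? ?]] /orP[?|/andP[/eqP ? ?]]; lia. Qed.

Lemma wltxx a : wlt a a = false.
Proof. by rewrite /wlt ltnn eqxx ltnn. Qed.

Lemma wlt_total a b : a != b -> wlt a b || wlt b a.
Proof. by rewrite /wlt => /eqP; lia. Qed.

Definition wrank a := count (wlt^~ a) (iota 0 n).

Lemma wrank_lt a : a < n -> wrank a < n.
Proof.
move=> a_lt_n; rewrite -[n in _ < n](size_iota 0 n) -count_predT.
by apply: (count_lt_sub (x := a)); rewrite ?mem_iota ?wltxx.
Qed.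

Lemma wrank_mono a b : a < n -> wlt a b -> wrank a < wrank b.
Proof.
move=> a_lt_n ab; apply: (count_lt_sub (x := a)); rewrite ?mem_iota ?wltxx //.
by move=> y /wlt_trans; apply.
Qed.

Lemma wrank_ltE a b : a < n -> b < n -> (wrank a < wrank b) = wlt a b.
Proof.
move=> a_lt_n b_lt_n; apply/idP/idP => [|/(wrank_mono a_lt_n)//].
case: (eqVneq a b) => [->|/wlt_total/orP[//|/(wrank_mono b_lt_n)]]; lia.
Qed.

Lemma wrank_inj a b : a < n -> b < n -> wrank a = wrank b -> a = b.
Proof.
move=> a_lt_n b_lt_n ab; apply/eqP/negP => /negP/wlt_total/orP.
by case=> [/(wrank_mono a_lt_n)|/(wrank_mono b_lt_n)]; rewrite ab ltnn.
Qed.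

Definition wrank_ord (i : 'I_n) : 'I_n := Ordinal (wrank_lt (ltn_ord i)).

Lemma wrank_ord_inj : injective wrank_ord.
Proof. by move=> i j /(congr1 val) /(wrank_inj (ltn_ord i) (ltn_ord j)) /val_inj. Qed.

Definition wpos : 'I_n -> 'I_n := invF wrank_ord_inj.

Lemma wposK : cancel wpos wrank_ord. Proof. exact: f_invF. Qed.
Lemma wrank_ordK : cancel wrank_ord wpos. Proof. exact: invF_f. Qed.

Lemma wrank_wpos i : wrank (wpos i) = i.
Proof. exact: (congr1 val (wposK i)). Qed.

(* [wpos] on [nat] indices, as needed for the relation [Unat] the algorithm
   runs on; the identity outside [0, n). *)
Definition wposn (k : nat) : nat := oapp (fun i => val (wpos i)) k (insub k).

Lemma wposnE (i : 'I_n) : wposn i = wpos i.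
Proof. by rewrite /wposn valK. Qed.

Lemma wposn_lt r : r < n -> wposn r < n.
Proof. by move=> r_lt_n; rewrite -[r]/(val (Ordinal r_lt_n)) wposnE. Qed.

Lemma wrank_wposn r : r < n -> wrank (wposn r) = r.
Proof. by move=> r_lt_n; rewrite -[r]/(val (Ordinal r_lt_n)) wposnE wrank_wpos. Qed.

Lemma wposn_wrank k : k < n -> wposn (wrank k) = k.
Proof.
by move=> k_lt_n; rewrite -[wrank k]/(val (wrank_ord (Ordinal k_lt_n))) wposnE wrank_ordK.
Qed.

Lemma perm_wposn : perm_eq (map wposn (iota 0 n)) (iota 0 n).
Proof.
have bij_wpos : bijective wpos := Bijective wposK wrank_ordK.
rewrite -val_enum_ord -map_comp (eq_map (g := val \o wpos)) => [|i]; last exact: wposnE.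
by rewrite map_comp perm_map // perm_map_enum_bij.
Qed.

Lemma count_wposn (P : pred nat) :
  count (fun k => P (wposn k)) (iota 0 n) = count P (iota 0 n).
Proof. by rewrite -[RHS](permP perm_wposn) count_map. Qed.

Lemma Prel_wlt x y : Prel w x y -> wlt x y.
Proof. by rewrite /Prel /wlt => /orP[?|/andP[/eqP ? ?]]; lia. Qed.

Lemma Prel_ltn x y : Prel w x y -> W x < W y.
Proof. by rewrite /Prel => /orP[?|/andP[/eqP ? ?]]; lia. Qed.

Lemma Prel_wlt_l x' x y : wlt x' x || (x' == x) -> Prel w x y -> Prel w x' y.
Proof.
by rewrite /Prel /wlt => /orP[/orP[?|/andP[/eqP ? ?]]|/eqP->] /orP[?|/andP[/eqP ? ?]]; lia.
Qed.

Lemma Prel_wlt_r x y y' : wlt y y' || (y == y') -> Prel w x y -> Prel w x y'.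
Proof.
by rewrite /Prel /wlt => /orP[/orP[?|/andP[/eqP ? ?]]|/eqP<-] /orP[?|/andP[/eqP ? ?]]; lia.
Qed.

Definition Prel_ranked : rel 'I_n := fun i j : 'I_n => Prel w (wpos i) (wpos j).

Lemma wpos_wle (i j : 'I_n) : i <= j -> wlt (wpos i) (wpos j) || (val (wpos i) == wpos j).
Proof.
move=> i_le_j; case: (eqVneq (val (wpos i)) (wpos j)) => [_|/wlt_total/orP[->//|ji]].
  by rewrite orbT.
by have := wrank_mono (ltn_ord _) ji; rewrite !wrank_wpos; lia.
Qed.

Lemma Prel_ranked_monotone : monotone_rel Prel_ranked.
Proof.
by split=> [k' k j /wpos_wle|k j j' /wpos_wle]; [apply: Prel_wlt_l | apply: Prel_wlt_r].
Qed.

Lemma Prel_ranked_lt i j : Prel_ranked i j -> i < j.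
Proof. by move/Prel_wlt/(wrank_mono (ltn_ord _)); rewrite !wrank_wpos. Qed.

Lemma Prel_ranked_iso : poset_iso Prel_ranked (Prel w).
Proof. by exists wpos; split=> //; exists wrank_ord; [apply: wposK | apply: wrank_ordK]. Qed.

Lemma poset_iso_Prel_ranked (U : rel 'I_n) :
  monotone_rel U -> poset_iso U (Prel w) -> U = Prel_ranked.
Proof.
move=> monoU [f [bij_f Uf]].
apply: (iso_monotone_rel_eq (f := wrank_ord \o f)) => //.
- exact: Prel_ranked_monotone.
- exact: bij_comp (Bijective wrank_ordK wposK) bij_f.
- by move=> i j; rewrite Uf /Prel_ranked /= !wrank_ordK.
Qed.

Lemma Unat_Prel_ranked x y : x < n -> y < n ->
  Unat Prel_ranked x y = Prel w (wposn x) (wposn y).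
Proof.
move=> x_lt_n y_lt_n.
by rewrite -[x]/(val (Ordinal x_lt_n)) -[y]/(val (Ordinal y_lt_n)) Unat_ord !wposnE.
Qed.

(* The algorithm's word q_r: w read at the r positions of smallest rank. *)
Definition wtrunc r := [seq W k | k <- iota 0 n & wrank k < r].
Definition wleft p := [seq W k | k <- iota 0 p & W k <= W p].
Definition wright p := [seq W k | k <- iota p.+1 (n - p.+1) & W k < W p].

Lemma wtrunc_split r : r < n ->
  wtrunc r = wleft (wposn r) ++ wright (wposn r) /\
  wtrunc r.+1 = wleft (wposn r) ++ W (wposn r) :: wright (wposn r).
Proof.
move=> r_lt_n; set p := wposn r; have p_lt_n : p < n := wposn_lt r_lt_n.
have rank_lt k : k < n -> (wrank k < r) = wlt k p.
  by move=> k_lt_n; rewrite -(wrank_wposn r_lt_n) wrank_ltE.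
have rank_le k : k < n -> (wrank k < r.+1) = ~~ wlt p k.
  by move=> k_lt_n; rewrite ltnS leqNgt -(wrank_wposn r_lt_n) wrank_ltE.
rewrite /wtrunc /wleft /wright (iota_split p_lt_n) !filter_cat !map_cat /=.
rewrite wrank_wposn // ltnn ltnSn; split; congr (_ ++ _); try congr (_ :: _);
  congr map; apply: eq_in_filter => k; rewrite mem_iota => /andP[? ?].
all: by rewrite ?rank_lt ?rank_le /wlt; lia.
Qed.

Definition area_C p := count (fun k => (W k).+1 == W p) (iota 0 p).

Hypothesis area_w : area_seq n w.

Lemma area_nth0 : 0 < n -> W 0 = 0.
Proof. by case: area_w => _ []. Qed.

Lemma area_nthS i : 0 < i < n -> W i <= (W i.-1).+1.
Proof. by case: area_w => _ [_ step] /andP[]; apply: step. Qed.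

Lemma area_ivt k p v : k <= p < n -> W k <= v < W p ->
  exists2 k', k <= k' < p & W k' = v.
Proof.
elim: p => [|p IHp] /andP[k_le_p p_lt_n] /andP[Wk_le_v v_lt_Wp].
  by move: k_le_p Wk_le_v; rewrite leqn0 => /eqP->; lia.
case: (ltngtP k p.+1) k_le_p => // [k_le_p _|k_eq]; last by rewrite k_eq in Wk_le_v; lia.
rewrite ltnS in k_le_p.
have := area_nthS (i := p.+1) p_lt_n; rewrite /= => Wstep.
case: (eqVneq v (W p)) => [->|v_ne]; first by exists p; rewrite ?leqnn ?k_le_p.
have [||k' /andP[k_le_k' k'_lt_p] Wk'] := IHp.
- by rewrite k_le_p ltnW.
- by rewrite Wk_le_v /=; lia.
- by exists k' => //; rewrite k_le_k' ltnW.
Qed.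

Lemma area_pred_witness p : p < n -> 0 < W p -> exists2 k, k < p & W k = (W p).-1.
Proof.
move=> p_lt_n Wp_gt0; have W0 := area_nth0 (leq_ltn_trans (leq0n p) p_lt_n).
have [|k /andP[_ k_lt_p] Wk] := @area_ivt 0 p (W p).-1 p_lt_n; first by rewrite W0; lia.
by exists k.
Qed.

Lemma area_last_pred p : p < n -> 0 < W p ->
  exists2 q, q < p /\ W q = (W p).-1 & forall k, q < k < p -> W p <= W k.
Proof.
move=> p_lt_n Wp_gt0; pose P k := (k < p) && (W k == (W p).-1).
have exP : exists k, P k.
  by have [k ? Wk] := area_pred_witness p_lt_n Wp_gt0; exists k; rewrite /P Wk eqxx andbT.
have ubP k : P k -> k <= p by case/andP=> /ltnW.
case: (ex_maxnP exP ubP) => q /andP[q_lt_p /eqP Wq] q_max.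
exists q => // k /andP[q_lt_k k_lt_p]; rewrite leqNgt; apply/negP => Wk_lt.
have [||k' /andP[k_le_k' k'_lt_p] Wk'] := @area_ivt k p (W p).-1.
- by rewrite (ltnW k_lt_p) p_lt_n.
- by apply/andP; split; lia.
have := q_max k'; rewrite /P k'_lt_p Wk' eqxx => /(_ isT); lia.
Qed.

Lemma wleft_split p : p < n -> 0 < W p -> exists s1 s2,
  [/\ wleft p = s1 ++ (W p).-1 :: s2, all (pred1 (W p)) s2
    & area_C p = (count_mem (W p).-1 s1).+1].
Proof.
move=> p_lt_n Wp_gt0; have [q [q_lt_p Wq] q_last] := area_last_pred p_lt_n Wp_gt0.
set s2 := [seq W k | k <- iota q.+1 (p - q.+1) & W k <= W p].
exists [seq W k | k <- iota 0 q & W k <= W p], s2.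
rewrite /wleft /area_C (iota_split q_lt_p) filter_cat map_cat count_cat /= Wq leq_pred.
split=> [|//|].
- by rewrite /= Wq.
- rewrite all_map; apply/allP => k; rewrite mem_filter mem_iota => /andP[Wk_le /andP[q_lt_k k_lt]].
  by rewrite /= eqn_leq Wk_le q_last // q_lt_k; lia.
- rewrite (@eq_in_count _ _ pred0 (iota q.+1 _)) ?count_pred0 => [|k]; last first.
    rewrite mem_iota => /andP[q_lt_k k_lt]; have Wp_le := q_last k.
    by apply/negbTE; rewrite neq_ltn ltnS Wp_le ?orbT // q_lt_k; lia.
  rewrite prednK // eqxx addn0 addn1 count_map count_filter; congr _.+1.
  by apply: eq_count => k /=; lia.
Qed.

Lemma insert_step_area p : p < n ->
  insert_step (W p) (area_C p) (wleft p ++ wright p) = wleft p ++ W p :: wright p.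
Proof.
move=> p_lt_n; have right_lt : all (fun x => x < W p) (wright p).
  by rewrite all_map; apply/allP => k; rewrite mem_filter => /andP[].
have [Wp0|Wp_gt0] := posnP (W p).
  have -> : area_C p = 0 by rewrite /area_C Wp0 (@eq_count _ _ pred0) ?count_pred0.
  apply: insert_step0 right_lt; rewrite all_map; apply/allP => k.
  by rewrite mem_filter Wp0 leqn0 => /andP[].
have [s1 [s2 [-> s2_a ->]]] := wleft_split p_lt_n Wp_gt0.
by rewrite -!catA /=; apply: insert_step_cat.
Qed.

Local Notation R := (Unat Prel_ranked).
Local Notation L := (levs (Unat Prel_ranked) n).

Lemma levs_ranked j : j < n -> nth 0 L j = W (wposn j).
Proof.
elim/ltn_ind: j => j IHj j_lt_n; rewrite nth_levs // /lev_next.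
set p := wposn j; have p_lt_n : p < n := wposn_lt j_lt_n.
rewrite (eq_bigr (fun i : 'I_j => (W (wposn i)).+1)) => [|i _]; last first.
  have i_lt_n := ltn_trans (ltn_ord i) j_lt_n.
  by rewrite (nth_levs_prefix _ (ltn_ord i) (ltnW j_lt_n)) IHj.
apply/eqP; rewrite eqn_leq; apply/andP; split.
  apply/bigmax_leqP => i; rewrite Unat_Prel_ranked //; last exact: ltn_trans (ltn_ord i) j_lt_n.
  exact: Prel_ltn.
have [->//|Wp_gt0] := posnP (W p).
have [k k_lt_p Wk] := area_pred_witness p_lt_n Wp_gt0.
have k_lt_n := ltn_trans k_lt_p p_lt_n.
have rank_k : wrank k < j.
  by rewrite -(wrank_wposn j_lt_n) -/p; apply: wrank_mono => //; rewrite /wlt Wk; lia.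
have := leq_bigmax_cond (P := fun i : 'I_j => R i j)
  (F := fun i : 'I_j => (W (wposn i)).+1) (Ordinal rank_k).
rewrite /= wposn_wrank // Wk prednK //; apply.
by rewrite Unat_Prel_ranked ?wrank_lt // wposn_wrank // /Prel Wk prednK // eqxx k_lt_p orbT.
Qed.

Lemma Ccount_ranked j : j < n -> Ccount R L j = area_C (wposn j).
Proof.
move=> j_lt_n; set p := wposn j; have p_lt_n : p < n := wposn_lt j_lt_n.
pose Q x := Prel w x p && (W x == (W p).-1).
have Ccount_Q : Ccount R L j = count (fun k => Q (wposn k)) (iota 0 n).
  rewrite /Ccount -(count_iota_ltn _ (ltnW j_lt_n)); apply: eq_in_count => k.
  rewrite mem_iota /= => k_lt_n; rewrite Unat_Prel_ranked // !levs_ranked //.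
  case: (ltnP k j) => [_|j_le_k]; rewrite ?andbT ?andbF //.
  apply/esym/negbTE/negP => /andP[/Prel_wlt/(wrank_mono (wposn_lt k_lt_n))].
  by rewrite !wrank_wposn //; lia.
rewrite Ccount_Q count_wposn /area_C -(count_iota_ltn _ (ltnW p_lt_n)).
by apply: eq_count => x; rewrite /Q /Prel; apply/idP/idP; lia.
Qed.

Lemma qrec_ranked r : r < n -> qrec R L r = wtrunc r.+1.
Proof.
elim: r => [|r IHr] r_lt_n /=.
  have wtrunc0 : wtrunc 0 = [::] by rewrite /wtrunc (@eq_filter _ _ pred0) ?filter_pred0.
  have [] := wtrunc_split r_lt_n; rewrite wtrunc0 => /esym/nilP.
  rewrite cat_nilp => /andP[/nilP-> /nilP->] ->.
  by have := levs_ranked r_lt_n; rewrite nth_levs // /lev_next big_ord0 => <-.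
have [trunc trunc'] := wtrunc_split r_lt_n.
rewrite IHr 1?ltnW // trunc trunc' levs_ranked // Ccount_ranked //.
exact: insert_step_area (wposn_lt r_lt_n).
Qed.

Lemma qU_ranked : 0 < n -> qU Prel_ranked = w.
Proof.
move=> n_gt0; rewrite /qU qrec_ranked ?prednK ?ltn_predL //.
rewrite /wtrunc (@eq_in_filter _ _ predT) => [|k]; last by rewrite mem_iota => /wrank_lt.
by case: area_w => <- _; rewrite filter_predT; apply: mkseq_nth.
Qed.

End AreaOrder.

Section Profiles.
Variable n : nat.
(* Area sequences (w_i <= i) and predecessor counts (d(j) <= j) both fit. *)
Local Notation word := {ffun 'I_n -> 'I_n.+1}.

Definition word_seq (t : word) : seq nat := [seq val (t i) | i <- enum 'I_n].

Lemma size_word_seq t : size (word_seq t) = n.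
Proof. by rewrite size_map size_enum_ord. Qed.

Lemma nth_word_seq t (i : 'I_n) : nth 0 (word_seq t) i = t i.
Proof. by rewrite (nth_map i) ?size_enum_ord // nth_ord_enum. Qed.

Definition area_seqb (w : seq nat) :=
  [&& size w == n, (0 < n) ==> (nth 0 w 0 == 0) &
      [forall i : 'I_n, (0 < i) ==> (nth 0 w i <= (nth 0 w i.-1).+1)]].

Lemma area_seqP w : reflect (area_seq n w) (area_seqb w).
Proof.
apply: (iffP and3P) => [[/eqP size_w /implyP w0 /forallP w_step]|[size_w [w0 w_step]]].
  split=> //; split=> [n_gt0|i i_gt0 i_lt_n]; first exact/eqP/w0.
  by have := w_step (Ordinal i_lt_n); rewrite /= i_gt0.
split; first by rewrite size_w.
  by apply/implyP => /w0 ->.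
by apply/forallP => i; apply/implyP => i_gt0; apply: w_step.
Qed.

Definition area_words := [set t : word | area_seqb (word_seq t)].

Definition profiles := [set d : word |
  [forall i : 'I_n, forall j : 'I_n, (i <= j) ==> (d i <= d j)] && [forall j, d j <= j]].

Definition profile (t : word) : word :=
  [ffun j : 'I_n => inord (npred (Prel_ranked (n := n) (word_seq t)) j)].

Definition profile_area (d : word) : word := [ffun j : 'I_n => inord (j - d j)].

Lemma profile_area_in d : d \in profiles -> profile_area d \in area_words.
Proof.
rewrite !inE => /andP[/forallP d_mono /forallP d_le].
have area_d (i : 'I_n) : nth 0 (word_seq (profile_area d)) i = i - d i.
  by rewrite nth_word_seq ffunE inordK //; have := ltn_ord i; lia.
apply/area_seqP; split; first exact: size_word_seq.
split=> [n_gt0|i i_gt0 i_lt_n]; first by rewrite (area_d (Ordinal n_gt0)) /= sub0n.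
have i1_lt_n : i.-1 < n by rewrite (leq_ltn_trans (leq_pred i)).
rewrite (area_d (Ordinal i_lt_n)) (area_d (Ordinal i1_lt_n)) /=.
have := d_le (Ordinal i_lt_n); have := d_le (Ordinal i1_lt_n).
have /implyP := forallP (d_mono (Ordinal i1_lt_n)) (Ordinal i_lt_n).
by rewrite /= leq_pred => /(_ isT); lia.
Qed.

Lemma profile_area_inj : {in profiles &, injective profile_area}.
Proof.
move=> d1 d2; rewrite !inE => /andP[_ /forallP d1_le] /andP[_ /forallP d2_le] d12.
apply/ffunP => j; apply: val_inj; have := congr1 (fun t : word => val (t j)) d12.
by rewrite !ffunE /= !inordK; have := d1_le j; have := d2_le j; have := ltn_ord j; lia.
Qed.

Lemma card_profiles_le : #|profiles| <= #|area_words|.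
Proof.
rewrite -(card_in_imset profile_area_inj); apply/subset_leq_card/subsetP.
by move=> _ /imsetP[d d_in ->]; apply: profile_area_in.
Qed.

Lemma profile_in t : profile t \in profiles.
Proof.
set P := Prel_ranked (n := n) (word_seq t).
have monoP : monotone_rel P by apply: Prel_ranked_monotone.
have npred_lt j : npred P j < n.+1 by rewrite ltnS npred_le_n.
rewrite inE; apply/andP; split.
  apply/forallP => i; apply/forallP => j; apply/implyP => i_le_j.
  by rewrite !ffunE !inordK //; apply: npred_mono.
apply/forallP => j; rewrite ffunE inordK //.
by apply: (npred_le monoP) => i k; apply: Prel_ranked_lt.
Qed.

Lemma profile_inj : {in area_words &, injective profile}.
Proof.
move=> t1 t2; rewrite !inE => /area_seqP area_t1 /area_seqP area_t2 t12.
have [n0|n_gt0] := posnP n.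
  by apply/ffunP => j; move: (ltn_ord j); rewrite {2}n0.
suff word_t12 : word_seq t1 = word_seq t2.
  by apply/ffunP => j; apply/val_inj; rewrite /= -!nth_word_seq word_t12.
rewrite -(qU_ranked area_t1 n_gt0) -(qU_ranked area_t2 n_gt0); congr qU.
apply: monotone_rel_eq; try exact: Prel_ranked_monotone.
move=> j; have := congr1 (fun t : word => val (t j)) t12.
by rewrite !ffunE /= !inordK // ltnS npred_le_n.
Qed.

Lemma profile_onto : profile @: area_words = profiles.
Proof.
have sub : profile @: area_words \subset profiles.
  by apply/subsetP => _ /imsetP[t _ ->]; apply: profile_in.
have card_eq : #|profile @: area_words| = #|profiles|.
  apply/eqP; rewrite eqn_leq subset_leq_card //.
  by rewrite (card_in_imset profile_inj) card_profiles_le.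
by apply/setP/(subset_cardP card_eq).
Qed.

Lemma npred_Prel_ranked_onto (g : 'I_n -> nat) :
  {homo g : i j / i <= j} -> (forall j, g j <= j) ->
  exists2 w, area_seq n w & npred (Prel_ranked w) =1 g.
Proof.
move=> g_mono g_le.
have g_lt j : g j < n.+1 by rewrite ltnS (leq_trans (g_le j)) // ltnW.
have : [ffun j => inord (g j)] \in profiles.
  rewrite inE; apply/andP; split.
    apply/forallP => i; apply/forallP => j; apply/implyP => i_le_j.
    by rewrite !ffunE !inordK // g_mono.
  by apply/forallP => j; rewrite ffunE inordK.
rewrite -profile_onto => /imsetP[t t_area t_g].
exists (word_seq t); first by move: t_area; rewrite inE => /area_seqP.
move=> j; have := congr1 (fun d : word => val (d j)) t_g.
by rewrite /profile !ffunE /= !inordK ?g_lt ?ltnS ?npred_le_n // => ->.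
Qed.

End Profiles.

Theorem mainTheorem6 (n : nat) (U : rel 'I_n) :
  0 < n -> unit_interval_order U ->
  forall w : seq nat, (area_seq n w /\ poset_iso U (Prel w)) <-> w = qU U.
Proof.
move=> n_gt0 uioU w.
have monoU := unit_interval_order_monotone uioU.
have [w0 area_w0 npred_w0] := npred_Prel_ranked_onto (npred_mono monoU)
  (npred_le monoU (unit_interval_order_lt uioU)).
have w0_U : Prel_ranked w0 = U :=
  monotone_rel_eq (Prel_ranked_monotone _ _) monoU npred_w0.
split=> [[area_w /(poset_iso_Prel_ranked monoU) ->]|->]; first by rewrite qU_ranked.
by rewrite -w0_U qU_ranked //; split=> //; apply: Prel_ranked_iso.
Qed.
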